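(* Let $(f,\varphi):(X_1,\kappa_1,A_1)\to(X_2,\kappa_2,A_2)$ be a monomorphism in $\mathbf{Sys}(L)$. If $(X_2,\kappa_2,A_2)$ is $T_0$, then $(X_1,\kappa_1,A_1)$ is $T_0$.
   Context: Fix a variety $\mathbf{A}$ of algebras (full subcategory of the category of $\Omega$-algebras and homomorphisms closed under products, subalgebras and homomorphic images); standing assumptions of the paper: $\mathbf{A}$ has set-indexed coproducts and a free algebra over a singleton. Fix an $\mathbf{A}$-algebra $L$; $L^X$ is the power algebra. An affine system is $(X,\kappa,A)$ with $X$ a set, $A$ an algebra, $\kappa:A\to L^X$ a homomorphism; a morphism $(f,\varphi):(X_1,\kappa_1,A_1)\to(X_2,\kappa_2,A_2)$ is a map $f:X_1\to X_2$ with a homomorphism $\varphi:A_2\to A_1$ such that $\kappa_1(\varphi(a))(x)=\kappa_2(a)(f(x))$ for all $a\in A_2,x\in X_1$; composition $(g,\psi)\circ(f,\varphi)=(g\circ f,\varphi\circ\psi)$; this is $\mathbf{Sys}(L)$. A system is $T_0$ if for all $x,y\in X$, $\kappa(a)(x)=\kappa(a)(y)$ for all $a\in A$ implies $x=y$. *)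

Set Implicit Arguments.
Unset Strict Implicit.

Record signature := Signature { op_sym : Type; arity : op_sym -> nat }.
Arguments arity {s} _.

Section UA.
Variable Om : signature.

Definition args (n : nat) (T : Type) := {i : nat | i < n} -> T.

Record alg := Alg {
  carrier :> Type;
  ops : forall o : op_sym Om, args (arity o) carrier -> carrier }.
Arguments ops : clear implicits.

Definition is_hom (A B : alg) (h : A -> B) : Prop :=
  forall (o : op_sym Om) (a : args (arity o) A),
    h (ops A o a) = ops B o (fun i => h (a i)).

Definition prod_alg (I : Type) (F : I -> alg) : alg :=
  @Alg (forall i, F i) (fun o a i => ops (F i) o (fun k => a k i)).

Definition pow_alg (L : alg) (X : Type) : alg := @prod_alg X (fun _ => L).

Definition op_closed (A : alg) (P : A -> Prop) : Prop :=
  forall (o : op_sym Om) (a : args (arity o) A),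
    (forall i, P (a i)) -> P (ops A o a).

Definition sub_alg (A : alg) (P : A -> Prop) (HP : op_closed P) : alg :=
  @Alg {x : A | P x}
    (fun o a => exist P (ops A o (fun i => proj1_sig (a i)))
                       (HP o (fun i => proj1_sig (a i)) (fun i => proj2_sig (a i)))).

Definition is_variety (V : alg -> Prop) : Prop :=
  (forall (I : Type) (F : I -> alg), (forall i, V (F i)) -> V (prod_alg F)) /\
  (forall (A : alg) (P : A -> Prop) (HP : op_closed P), V A -> V (sub_alg HP)) /\
  (forall (A B : alg) (h : A -> B), is_hom h -> (forall b, exists a, h a = b) ->
      V A -> V B).

Definition has_coproducts (V : alg -> Prop) : Prop :=
  forall (I : Type) (F : I -> alg), (forall i, V (F i)) ->
  exists (C : alg) (inj : forall i, F i -> C),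
    V C /\ (forall i, is_hom (inj i)) /\
    forall (B : alg) (g : forall i, F i -> B), V B -> (forall i, is_hom (g i)) ->
      exists h : C -> B, is_hom h /\ (forall i x, h (inj i x) = g i x) /\
        forall h' : C -> B, is_hom h' -> (forall i x, h' (inj i x) = g i x) ->
          forall c, h' c = h c.

Definition has_free_singleton (V : alg -> Prop) : Prop :=
  exists (F : alg) (x0 : F), V F /\
    forall (B : alg) (b : B), V B ->
      exists h : F -> B, is_hom h /\ h x0 = b /\
        forall h' : F -> B, is_hom h' -> h' x0 = b -> forall c, h' c = h c.

Section Sys.
Variable V : alg -> Prop.
Variable L : alg.

Record sys := Sys {
  sX : Type;
  sA : alg;
  sA_in : V sA;
  kappa : sA -> (sX -> L);
  kappa_hom : @is_hom sA (pow_alg L sX) kappa }.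
Arguments kappa : clear implicits.

Record sys_mor (S1 S2 : sys) := SysMor {
  mf : sX S1 -> sX S2;
  mphi : sA S2 -> sA S1;
  mphi_hom : is_hom mphi;
  mcompat : forall (a : sA S2) (x : sX S1), kappa S1 (mphi a) x = kappa S2 a (mf x) }.

Definition sys_comp (S1 S2 S3 : sys) (m2 : sys_mor S2 S3) (m1 : sys_mor S1 S2)
  : sys_mor S1 S3.
Proof.
  refine (@SysMor S1 S3 (fun x => mf m2 (mf m1 x)) (fun a => mphi m1 (mphi m2 a)) _ _).
  - intros o a. rewrite (mphi_hom m2). rewrite (mphi_hom m1). reflexivity.
  - intros a x. rewrite (mcompat m1). rewrite (mcompat m2). reflexivity.
Defined.

Definition mor_eq (S1 S2 : sys) (m m' : sys_mor S1 S2) : Prop :=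
  (forall x, mf m x = mf m' x) /\ (forall a, mphi m a = mphi m' a).

Definition is_mono (S1 S2 : sys) (m : sys_mor S1 S2) : Prop :=
  forall (S0 : sys) (g h : sys_mor S0 S1),
    mor_eq (sys_comp m g) (sys_comp m h) -> mor_eq g h.

Definition T0 (S : sys) : Prop :=
  forall x y : sX S, (forall a : sA S, kappa S a x = kappa S a y) -> x = y.

End Sys.
End UA.


Set Implicit Arguments.
Unset Strict Implicit.

(* A point [x] of a system [S] is a morphism into [S] from the one-point
   system carrying the algebra of [S] and evaluation at [x].  Two points that
   no element of the algebra separates are morphisms out of the same one-point
   system; they agree after composition with [m], since [T0] of the codomain
   forces [mf m x = mf m y], so cancelling the monomorphism [m] gives
   [x = y]. *)

Section PointMorphisms.
Variables (Om : signature) (V : alg Om -> Prop) (L : alg Om).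

Definition indistinguishable (S : sys V L) (x y : sX S) : Prop :=
  forall a : sA S, kappa (s:=S) a x = kappa (s:=S) a y.

Lemma is_hom_id (A : alg Om) : is_hom (fun a : A => a).
Proof. intros o a. reflexivity. Qed.

Lemma is_hom_eval (S : sys V L) (x : sX S) :
  @is_hom Om (sA S) (pow_alg L unit) (fun a _ => kappa (s:=S) a x).
Proof. intros o a. rewrite (kappa_hom (s:=S)). reflexivity. Qed.

Definition eval_sys (S : sys V L) (x : sX S) : sys V L :=
  @Sys Om V L unit (sA S) (sA_in S) (fun a _ => kappa (s:=S) a x) (is_hom_eval x).

(* With [Hxy := fun _ => eq_refl] this is the point [x] itself. *)
Definition point_mor (S : sys V L) (x y : sX S) (Hxy : indistinguishable x y)
  : sys_mor (eval_sys x) S :=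
  @SysMor Om V L (eval_sys x) S (fun _ => y) (fun a => a) (@is_hom_id (sA S))
    (fun a _ => Hxy a).

Lemma mor_preserves_indistinguishable (S1 S2 : sys V L) (m : sys_mor S1 S2)
  (x y : sX S1) :
  indistinguishable x y -> indistinguishable (mf m x) (mf m y).
Proof. intros Hxy b. rewrite <- !(mcompat m). apply Hxy. Qed.

Lemma mono_injective_on_indistinguishable (S1 S2 : sys V L) (m : sys_mor S1 S2)
  (x y : sX S1) :
  is_mono m -> indistinguishable x y -> mf m x = mf m y -> x = y.
Proof.
  intros Hm Hxy Hf.
  destruct (Hm _ (point_mor (x:=x) (y:=x) (fun _ => eq_refl)) (point_mor Hxy))
    as [Hpoints _].
  - split; intros; simpl; [exact Hf | reflexivity].
  - exact (Hpoints tt).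
Qed.

End PointMorphisms.

Theorem proposition10 (Om : signature) (V : alg Om -> Prop)
  (HV : is_variety V) (Hcop : has_coproducts V) (Hfree : has_free_singleton V)
  (L : alg Om) (HL : V L)
  (S1 S2 : sys V L) (m : sys_mor S1 S2) :
  is_mono m -> T0 S2 -> T0 S1.
Proof.
  intros Hm HT2 x y Hxy.
  apply (mono_injective_on_indistinguishable Hm Hxy).
  apply HT2; exact (mor_preserves_indistinguishable m Hxy).
Qed.
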